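(* Let $h\colon R\to S$ be a flat morphism of commutative rings and $\mathfrak{a}\subseteq R$ an ideal. (a) If some power $\mathfrak{a}^n$ ($n\geq1$) is finitely generated, then for every $R$-module $M$ the maps $\rho^h_\mathfrak{a}(M)$ and $\overline{\rho}^h_\mathfrak{a}(M)$ coincide and are isomorphisms. (b) If $M$ is a noetherian $R$-module, then $\rho^h_\mathfrak{a}(M)=\overline{\rho}^h_\mathfrak{a}(M)$ is an isomorphism. (c) If the $R$-module $S$ is Mittag-Leffler, then $\rho^h_\mathfrak{a}(M)$ is an isomorphism for every $R$-module $M$.
   Context: $\Gamma_\mathfrak{a}(M)=\{x\in M\mid \exists n\in\mathbb{N}:\mathfrak{a}^n\subseteq(0:_Rx)\}$, $\overline{\Gamma}_\mathfrak{a}(M)=\{x\in M\mid \mathfrak{a}\subseteq\sqrt{(0:_Rx)}\}$; $\mathfrak{a}S$ is the ideal of $S$ generated by $h(\mathfrak{a})$. By flatness, $s\otimes m\mapsto s\otimes m$ gives injective $S$-linear maps $\rho^h_\mathfrak{a}(M)\colon S\otimes_R\Gamma_\mathfrak{a}(M)\to\Gamma_{\mathfrak{a}S}(S\otimes_RM)$ and $\overline{\rho}^h_\mathfrak{a}(M)\colon S\otimes_R\overline{\Gamma}_\mathfrak{a}(M)\to\overline{\Gamma}_{\mathfrak{a}S}(S\otimes_RM)$. An $R$-module $N$ is Mittag-Leffler if for every family $(N_i)_{i\in I}$ of $R$-modules the canonical map $N\otimes_R\prod_iN_i\to\prod_i(N\otimes_RN_i)$, $x\otimes(y_i)\mapsto(x\otimes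 y_i)$, is injective. *)

From HB Require Import structures.
From mathcomp Require Import all_boot all_order all_algebra.
From mathcomp Require Import boolp.
Set Implicit Arguments. Unset Strict Implicit. Unset Printing Implicit Defensive.
Import GRing.Theory.
Local Open Scope ring_scope.

Section DProd.
Variables (R : pzRingType) (I : Type) (N : I -> lmodType R).
Definition dprod := forall i : I, N i.
HB.instance Definition _ := Choice.on dprod.
Definition dprod_zero : dprod := fun i => 0.
Definition dprod_add (f g : dprod) : dprod := fun i => f i + g i.
Definition dprod_opp (f : dprod) : dprod := fun i => - f i.
Definition dprod_scale (r : R) (f : dprod) : dprod := fun i => r *: f i.
Let addA : associative dprod_add.
Proof. by move=> f g k; apply: functional_extensionality_dep => i; rewrite /dprod_add addrA. Qed.
Let addC : commutative dprod_add.
Proof. by move=> f g; apply: functional_extensionality_dep => i; rewrite /dprod_add addrC. Qed.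
Let add0 : left_id dprod_zero dprod_add.
Proof. by move=> f; apply: functional_extensionality_dep => i; rewrite /dprod_add add0r. Qed.
HB.instance Definition _ := GRing.isNmodule.Build dprod addA addC add0.
Let addN : left_inverse dprod_zero dprod_opp dprod_add.
Proof. by move=> f; apply: functional_extensionality_dep => i; rewrite /dprod_add addNr. Qed.
HB.instance Definition _ := GRing.Nmodule_isZmodule.Build dprod addN.
Let scA a b f : dprod_scale a (dprod_scale b f) = dprod_scale (a * b) f.
Proof. by apply: functional_extensionality_dep => i; rewrite /dprod_scale scalerA. Qed.
Let sc1 : left_id 1 dprod_scale.
Proof. by move=> f; apply: functional_extensionality_dep => i; rewrite /dprod_scale scale1r. Qed.
Let scDr : right_distributive dprod_scale dprod_add.
Proof. by move=> a f g; apply: functional_extensionality_dep => i; rewrite /dprod_scale /dprod_add scalerDr. Qed.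
Let scDl f : {morph dprod_scale^~ f : a b / a + b >-> dprod_add a b}.
Proof. by move=> a b; apply: functional_extensionality_dep => i; rewrite /dprod_scale /dprod_add scalerDl. Qed.
HB.instance Definition _ := GRing.Zmodule_isLmodule.Build R dprod scA sc1 scDr scDl.
End DProd.

Definition is_ideal (A : comPzRingType) (J : A -> Prop) : Prop :=
  [/\ J 0, (forall x y, J x -> J y -> J (x + y)) & (forall r x, J x -> J (r * x))].

Definition gen_ideal (A : comPzRingType) (X : A -> Prop) : A -> Prop :=
  fun a => exists k (c g : 'I_k -> A),
      (forall i, X (g i)) /\ a = \sum_(i < k) c i * g i.

Definition ideal_pow (A : comPzRingType) (J : A -> Prop) (n : nat) : A -> Prop :=
  gen_ideal (fun a => exists f : 'I_n -> A,
                 (forall j, J (f j)) /\ a = \prod_(j < n) f j).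

Definition ext_ideal (A B : comPzRingType) (h : A -> B) (J : A -> Prop) : B -> Prop :=
  gen_ideal (fun b => exists a, J a /\ b = h a).

Definition fg_ideal (A : comPzRingType) (J : A -> Prop) : Prop :=
  exists k (g : 'I_k -> A),
    forall a, J a <-> gen_ideal (fun x => exists i, x = g i) a.

Definition Gamma (A : comPzRingType) (M : lmodType A) (J : A -> Prop) (x : M) : Prop :=
  exists n : nat, forall r, ideal_pow J n r -> r *: x = 0.

Definition Gammabar (A : comPzRingType) (M : lmodType A) (J : A -> Prop) (x : M) : Prop :=
  forall r, J r -> exists k : nat, r ^+ k *: x = 0.

Definition submodule (A : comPzRingType) (M : lmodType A) (N : M -> Prop) : Prop :=
  [/\ N 0, (forall x y, N x -> N y -> N (x + y)) & (forall r x, N x -> N (r *: x))].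

Definition fg_submodule (A : comPzRingType) (M : lmodType A) (N : M -> Prop) : Prop :=
  exists k (g : 'I_k -> M), (forall i, N (g i)) /\
    forall x, N x -> exists c : 'I_k -> A, x = \sum_(i < k) c i *: g i.

Definition noetherian_module (A : comPzRingType) (M : lmodType A) : Prop :=
  forall N : M -> Prop, submodule N -> fg_submodule N.

(* Base change  S (x)_R P  for a submodule P of an R-module M, given  *)
(* by its universal property (as an S-module, S acting on the left).  *)

Section Tensor.
Variables (R S : comPzRingType) (h : {rmorphism R -> S}).

Definition balanced (M : lmodType R) (P : M -> Prop) (V : lmodType S)
    (phi : S -> M -> V) : Prop :=
  [/\ (forall m, P m -> forall c s s', phi (c * s + s') m = c *: phi s m + phi s' m),
      (forall s m m', P m -> P m' -> phi s (m + m') = phi s m + phi s m')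
    & (forall s r m, P m -> phi (h r * s) m = phi s (r *: m))].

(* (T, b) is a tensor product  S (x)_R P, with b s m = s (x) m *)
Definition is_tensor (M : lmodType R) (P : M -> Prop) (T : lmodType S)
    (b : S -> M -> T) : Prop :=
  balanced P b /\
  forall (V : lmodType S) (phi : S -> M -> V), balanced P phi ->
    (exists psi : {linear T -> V}, forall s m, P m -> psi (b s m) = phi s m) /\
    (forall psi1 psi2 : {linear T -> V},
        (forall s m, P m -> psi1 (b s m) = psi2 (b s m)) -> forall t, psi1 t = psi2 t).

Definition TT (M : lmodType R) : M -> Prop := fun _ => True.

Definition flat : Prop :=
  forall (N N' : lmodType R) (f : {linear N -> N'}), injective f ->
  forall (T : lmodType S) (b : S -> N -> T) (T' : lmodType S) (b' : S -> N' -> T'),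
    is_tensor (@TT N) b -> is_tensor (@TT N') b' ->
  forall g : {linear T -> T'}, (forall s n, g (b s n) = b' s (f n)) ->
    injective g.

Definition mittag_leffler : Prop :=
  forall (I : Type) (N : I -> lmodType R)
    (T : lmodType S) (b : S -> dprod N -> T)
    (Ti : I -> lmodType S) (bi : forall i, S -> N i -> Ti i)
    (g : forall i, {linear T -> Ti i}),
    is_tensor (@TT (dprod N)) b ->
    (forall i, is_tensor (@TT (N i)) (bi i)) ->
    (forall i s x, g i (b s x) = bi i s (x i)) ->
    injective (fun u : T => (fun i => g i u) : dprod Ti).

Definition is_rho (M : lmodType R) (P : M -> Prop) (T0 : lmodType S)
    (b0 : S -> M -> T0) (T : lmodType S) (b : S -> M -> T) (rho : T0 -> T) : Prop :=
  forall s m, P m -> rho (b0 s m) = b s m.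

End Tensor.

Definition iso_onto (A : comPzRingType) (U V : lmodType A) (f : U -> V) (Q : V -> Prop) : Prop :=
  injective f /\ forall v, Q v <-> exists u, f u = v.

(* Say that finitely many g_1, ..., g_k in a detect Gamma_a(M) if every x killed by some
   power of each g_i lies in Gamma_a(M).  This holds when a power a^n is generated by the
   g_i (a product of enough elements of a^n contains a high power of one generator), and
   for noetherian M with suitable g_i, since a agrees with (g_1, ..., g_k) modulo the
   annihilator of M.  Detection gives Gamma = Gammabar on M.
   Let t in S (x) M be killed by all h(g_i)^N and let M' be the submodule killed by all
   g_i^N.  Then M/M' embeds in M^k by x |-> (g_i^N x)_i; by flatness and right exactness
   (S (x) M)/<S (x) M'> embeds in S (x) M^k = (S (x) M)^k, where t maps to
   (h(g_i)^N t)_i = 0.  So t lies in the image of S (x) M' and hence of S (x) Gamma_a(M),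
   while injectivity of rho is flatness applied to Gamma_a(M) in M.  For (c) the same
   argument runs with the family of all elements of a^N, the Mittag-Leffler property
   replacing the finiteness of the product. *)

From HB Require Import structures.
From mathcomp Require Import all_boot all_order all_algebra.
From mathcomp Require Import boolp generic_quotient.
Set Implicit Arguments. Unset Strict Implicit. Unset Printing Implicit Defensive.
Import GRing.Theory.
Local Open Scope quotient_scope.
Local Open Scope ring_scope.

Section LinearOf.
Variables (A : pzRingType) (U V : lmodType A) (f : U -> V) (f_lin : linear f).
Definition linear_fun := f.
HB.instance Definition _ := GRing.isLinear.Build A U V *:%R linear_fun f_lin.
Definition linear_of : {linear U -> V} := linear_fun.
Lemma linear_ofE x : linear_of x = f x. Proof. by []. Qed.
End LinearOf.
Arguments linear_of {A U V f}.

Section SetoidQuotient.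
Variables (A : pzRingType) (X : choiceType) (e : X -> X -> Prop).
Variables (zero : X) (add : X -> X -> X) (opp : X -> X) (scale : A -> X -> X).
Hypotheses (e_refl : forall x, e x x) (e_sym : forall x y, e x y -> e y x)
  (e_trans : forall x y w, e x y -> e y w -> e x w).
Hypotheses (add_e : forall x x' y y', e x x' -> e y y' -> e (add x y) (add x' y'))
  (opp_e : forall x x', e x x' -> e (opp x) (opp x'))
  (scale_e : forall c x x', e x x' -> e (scale c x) (scale c x')).
Hypotheses (addA : forall x y w, e (add x (add y w)) (add (add x y) w))
  (addC : forall x y, e (add x y) (add y x)) (add0 : forall x, e (add zero x) x)
  (addN : forall x, e (add (opp x) x) zero)
  (scaleA : forall a b x, e (scale a (scale b x)) (scale (a * b) x))
  (scale1 : forall x, e (scale 1 x) x)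
  (scaleDr : forall a x y, e (scale a (add x y)) (add (scale a x) (scale a y)))
  (scaleDl : forall a b x, e (scale (a + b) x) (add (scale a x) (scale b x))).

Definition eqv : rel X := fun x y => `[< e x y >].
Lemma eqv_refl : reflexive eqv. Proof. by move=> x; apply/asboolP. Qed.
Lemma eqv_sym : symmetric eqv.
Proof. by move=> x y; apply/asboolP/asboolP; apply: e_sym. Qed.
Lemma eqv_trans : transitive eqv.
Proof. by move=> y x w /asboolP exy /asboolP eyw; apply/asboolP; apply: e_trans eyw. Qed.
Canonical eqv_equiv := EquivRel eqv eqv_refl eqv_sym eqv_trans.
Definition setoid_quot := {eq_quot eqv}.
HB.instance Definition _ := Choice.on setoid_quot.
Definition qpi (x : X) : setoid_quot := \pi_setoid_quot x.

Lemma qpi_eq x y : qpi x = qpi y <-> e x y.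
Proof. by split => [/eqmodP /asboolP|exy]; [|apply/eqmodP/asboolP]. Qed.
Lemma qpi_surj q : exists x, q = qpi x.
Proof. by exists (repr q); rewrite /qpi reprK. Qed.
Lemma qpi_repr x : e (repr (qpi x)) x.
Proof. by apply/qpi_eq; rewrite /qpi reprK. Qed.

Definition qzero : setoid_quot := qpi zero.
Definition qadd (p q : setoid_quot) : setoid_quot := qpi (add (repr p) (repr q)).
Definition qopp (p : setoid_quot) : setoid_quot := qpi (opp (repr p)).
Definition qscale c (p : setoid_quot) : setoid_quot := qpi (scale c (repr p)).
Let qaddE x y : qadd (qpi x) (qpi y) = qpi (add x y).
Proof. by apply/qpi_eq; apply: add_e; apply: qpi_repr. Qed.
Let qoppE x : qopp (qpi x) = qpi (opp x).
Proof. by apply/qpi_eq; apply: opp_e; apply: qpi_repr. Qed.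
Let qscaleE c x : qscale c (qpi x) = qpi (scale c x).
Proof. by apply/qpi_eq; apply: scale_e; apply: qpi_repr. Qed.

Let qaddA : associative qadd.
Proof.
move=> p q r; have [x ->] := qpi_surj p; have [y ->] := qpi_surj q.
by have [w ->] := qpi_surj r; rewrite !qaddE; apply/qpi_eq.
Qed.
Let qaddC : commutative qadd.
Proof.
by move=> p q; have [x ->] := qpi_surj p; have [y ->] := qpi_surj q; rewrite !qaddE; apply/qpi_eq.
Qed.
Let qadd0 : left_id qzero qadd.
Proof. by move=> p; have [x ->] := qpi_surj p; rewrite qaddE; apply/qpi_eq. Qed.
HB.instance Definition _ := GRing.isNmodule.Build setoid_quot qaddA qaddC qadd0.
Let qaddN : left_inverse qzero qopp qadd.
Proof. by move=> p; have [x ->] := qpi_surj p; rewrite qoppE qaddE; apply/qpi_eq. Qed.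
HB.instance Definition _ := GRing.Nmodule_isZmodule.Build setoid_quot qaddN.
Let qscaleA a b p : qscale a (qscale b p) = qscale (a * b) p.
Proof. by have [x ->] := qpi_surj p; rewrite !qscaleE; apply/qpi_eq. Qed.
Let qscale1 : left_id 1 qscale.
Proof. by move=> p; have [x ->] := qpi_surj p; rewrite !qscaleE; apply/qpi_eq. Qed.
Let qscaleDr : right_distributive qscale qadd.
Proof.
move=> c p q; have [x ->] := qpi_surj p; have [y ->] := qpi_surj q.
by rewrite qaddE !qscaleE qaddE; apply/qpi_eq.
Qed.
Let qscaleDl p : {morph qscale^~ p : a b / a + b >-> qadd a b}.
Proof. by move=> a b; have [x ->] := qpi_surj p; rewrite !qscaleE qaddE; apply/qpi_eq. Qed.
HB.instance Definition _ :=
  GRing.Zmodule_isLmodule.Build A setoid_quot qscaleA qscale1 qscaleDr qscaleDl.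
Definition quot_lmod : lmodType A := setoid_quot.

Lemma qpiD x y : qpi (add x y) = (qpi x : quot_lmod) + qpi y.
Proof. by rewrite -qaddE. Qed.
Lemma qpiZ c x : qpi (scale c x) = c *: (qpi x : quot_lmod).
Proof. by rewrite -qscaleE. Qed.
Lemma qpi0 : qpi zero = 0 :> quot_lmod. Proof. by []. Qed.
End SetoidQuotient.

Section Subquotient.
Variables (A : comPzRingType) (M : lmodType A) (P W : M -> Prop).
Hypotheses (subP : submodule P) (subW : submodule W).

Let P0 : P 0. Proof. by case: subP. Qed.
Let PD x y : P x -> P y -> P (x + y). Proof. by case: subP => _ + _; apply. Qed.
Let PZ c x : P x -> P (c *: x). Proof. by case: subP => _ _; apply. Qed.
Let W0 : W 0. Proof. by case: subW. Qed.
Let WD x y : W x -> W y -> W (x + y). Proof. by case: subW => _ + _; apply. Qed.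
Let WZ c x : W x -> W (c *: x). Proof. by case: subW => _ _; apply. Qed.

Definition subtype_of : choiceType := {m : M | `[< P m >]}.
Definition sub_mk m (Pm : P m) : subtype_of := exist _ m (introT (asboolP _) Pm).
Lemma sub_valP (x : subtype_of) : P (val x). Proof. by case: x => m /= /asboolP. Qed.
Definition sub_zero : subtype_of := sub_mk P0.
Definition sub_add x y : subtype_of := sub_mk (PD (sub_valP x) (sub_valP y)).
Definition sub_opp x : subtype_of := sub_mk (PZ (-1) (sub_valP x)).
Definition sub_scale c x : subtype_of := sub_mk (PZ c (sub_valP x)).
Definition sub_eqv (x y : subtype_of) : Prop := W (val x - val y).

Let eqv_val x y : val x = val y -> sub_eqv x y.
Proof. by rewrite /sub_eqv => ->; rewrite subrr; apply: W0. Qed.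
Let eqv_refl x : sub_eqv x x. Proof. exact: eqv_val. Qed.
Let eqv_sym x y : sub_eqv x y -> sub_eqv y x.
Proof. by rewrite /sub_eqv => exy; rewrite -opprB -scaleN1r; apply: WZ. Qed.
Let eqv_trans x y w : sub_eqv x y -> sub_eqv y w -> sub_eqv x w.
Proof. by rewrite /sub_eqv => exy eyw; have := WD exy eyw; rewrite addrA subrK. Qed.
Let add_eqv x x' y y' : sub_eqv x x' -> sub_eqv y y' -> sub_eqv (sub_add x y) (sub_add x' y').
Proof. by rewrite /sub_eqv /= opprD addrACA; apply: WD. Qed.
Let opp_eqv x x' : sub_eqv x x' -> sub_eqv (sub_opp x) (sub_opp x').
Proof. by rewrite /sub_eqv /= -scalerBr; apply: WZ. Qed.
Let scale_eqv c x x' : sub_eqv x x' -> sub_eqv (sub_scale c x) (sub_scale c x').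
Proof. by rewrite /sub_eqv /= -scalerBr; apply: WZ. Qed.

Let addA x y w : sub_eqv (sub_add x (sub_add y w)) (sub_add (sub_add x y) w).
Proof. by apply: eqv_val; rewrite /= addrA. Qed.
Let addC x y : sub_eqv (sub_add x y) (sub_add y x).
Proof. by apply: eqv_val; rewrite /= addrC. Qed.
Let add0 x : sub_eqv (sub_add sub_zero x) x.
Proof. by apply: eqv_val; rewrite /= add0r. Qed.
Let addN x : sub_eqv (sub_add (sub_opp x) x) sub_zero.
Proof. by apply: eqv_val; rewrite /= scaleN1r addNr. Qed.
Let scaleA a b x : sub_eqv (sub_scale a (sub_scale b x)) (sub_scale (a * b) x).
Proof. by apply: eqv_val; rewrite /= scalerA. Qed.
Let scale1 x : sub_eqv (sub_scale 1 x) x.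
Proof. by apply: eqv_val; rewrite /= scale1r. Qed.
Let scaleDr a x y : sub_eqv (sub_scale a (sub_add x y)) (sub_add (sub_scale a x) (sub_scale a y)).
Proof. by apply: eqv_val; rewrite /= scalerDr. Qed.
Let scaleDl a b x : sub_eqv (sub_scale (a + b) x) (sub_add (sub_scale a x) (sub_scale b x)).
Proof. by apply: eqv_val; rewrite /= scalerDl. Qed.

Definition subquot : lmodType A :=
  @quot_lmod _ _ _ _ _ _ _ eqv_refl eqv_sym eqv_trans add_eqv opp_eqv scale_eqv
  addA addC add0 addN scaleA scale1 scaleDr scaleDl.

Let spi (x : subtype_of) : subquot := @qpi _ _ eqv_refl eqv_sym eqv_trans x.
Let spi_eq x y : spi x = spi y <-> sub_eqv x y. Proof. exact: qpi_eq. Qed.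
Let spi_surj (q : subquot) : exists x, q = spi x. Proof. exact: qpi_surj. Qed.
Let spiD x y : spi (sub_add x y) = spi x + spi y. Proof. exact: qpiD. Qed.
Let spiZ c x : spi (sub_scale c x) = c *: spi x. Proof. exact: qpiZ. Qed.

(* Elements outside [P] are sent to [0]. *)
Definition sq_proj (m : M) : subquot := spi (insubd sub_zero m).
Definition sq_lift (q : subquot) : M := val (repr q).

Let sq_projE m (Pm : P m) : sq_proj m = spi (sub_mk Pm).
Proof. by apply/spi_eq/eqv_val; rewrite insubdK //=; apply/asboolP. Qed.

Lemma sq_proj_eq m m' : P m -> P m' -> (sq_proj m = sq_proj m' <-> W (m - m')).
Proof. by move=> Pm Pm'; rewrite (sq_projE Pm) (sq_projE Pm') spi_eq. Qed.
Lemma sq_projD m m' : P m -> P m' -> sq_proj (m + m') = sq_proj m + sq_proj m'.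
Proof.
move=> Pm Pm'; rewrite (sq_projE Pm) (sq_projE Pm') (sq_projE (PD Pm Pm')).
by rewrite -spiD; apply/spi_eq/eqv_val.
Qed.
Lemma sq_projZ c m : P m -> sq_proj (c *: m) = c *: sq_proj m.
Proof.
move=> Pm; rewrite (sq_projE Pm) (sq_projE (PZ c Pm)).
by rewrite -spiZ; apply/spi_eq/eqv_val.
Qed.
Lemma sq_proj_eq0 m : P m -> (sq_proj m = 0 <-> W m).
Proof.
move=> Pm; have -> : 0 = sq_proj 0 by rewrite -(scale0r (0 : M)) sq_projZ ?scale0r.
by rewrite sq_proj_eq ?subr0.
Qed.
Lemma sq_liftP q : P (sq_lift q). Proof. exact: sub_valP. Qed.
Lemma sq_liftK q : sq_proj (sq_lift q) = q.
Proof.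
have [x ->] := spi_surj q; rewrite (sq_projE (sq_liftP _)); apply/spi_eq.
exact: (qpi_repr eqv_refl eqv_sym eqv_trans).
Qed.
Lemma sq_lift_proj m : P m -> W (sq_lift (sq_proj m) - m).
Proof. by move=> Pm; apply/sq_proj_eq; rewrite ?sq_liftK //; apply: sq_liftP. Qed.
End Subquotient.

Lemma TT_submodule (A : comPzRingType) (M : lmodType A) : submodule (@TT A M).
Proof. by []. Qed.

Lemma zero_submodule (A : comPzRingType) (M : lmodType A) : submodule (fun m : M => m = 0).
Proof. by split => // [x y -> ->|r x ->]; rewrite ?addr0 ?scaler0. Qed.

Section QuotientModule.
Variables (A : comPzRingType) (M : lmodType A) (W : M -> Prop) (subW : submodule W).

Definition quotmod : lmodType A := subquot (TT_submodule M) subW.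
Let proj (m : M) : quotmod := sq_proj (TT_submodule M) subW m.
Lemma quot_proj_is_linear : linear proj.
Proof. by move=> c x y; rewrite /proj sq_projD // sq_projZ. Qed.
Definition quot_proj : {linear M -> quotmod} := linear_of quot_proj_is_linear.
Definition quot_lift (q : quotmod) : M := sq_lift q.

Lemma quot_proj_eq m m' : quot_proj m = quot_proj m' <-> W (m - m').
Proof. exact: sq_proj_eq. Qed.
Lemma quot_proj_eq0 m : quot_proj m = 0 <-> W m.
Proof. exact: sq_proj_eq0. Qed.
Lemma quot_liftK q : quot_proj (quot_lift q) = q.
Proof. exact: sq_liftK. Qed.
Lemma quot_lift_proj m : W (quot_lift (quot_proj m) - m).
Proof. exact: sq_lift_proj. Qed.
Lemma quot_proj_surj q : exists m, q = quot_proj m.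
Proof. by exists (quot_lift q); rewrite quot_liftK. Qed.

Lemma quot_univ (V : lmodType A) (f : {linear M -> V}) : (forall m, W m -> f m = 0) ->
  exists g : {linear quotmod -> V}, forall m, g (quot_proj m) = f m.
Proof.
move=> fW; have gE m : f (quot_lift (quot_proj m)) = f m.
  by apply/eqP; rewrite -subr_eq0 -linearB fW //; apply: quot_lift_proj.
have g_lin : linear (fun q => f (quot_lift q)).
  move=> c q q'; have [m ->] := quot_proj_surj q; have [m' ->] := quot_proj_surj q'.
  by rewrite -linearP !gE linearP.
by exists (linear_of g_lin) => m; rewrite linear_ofE gE.
Qed.
End QuotientModule.

Section SubmoduleModule.
Variables (A : comPzRingType) (M : lmodType A) (P : M -> Prop) (subP : submodule P).

Definition submod : lmodType A := subquot subP (zero_submodule M).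
Definition sub_proj (m : M) : submod := sq_proj subP (zero_submodule M) m.
Definition sub_incl (q : submod) : M := sq_lift q.

Lemma sub_inclP q : P (sub_incl q). Proof. exact: sq_liftP. Qed.
Lemma sub_projK q : sub_proj (sub_incl q) = q. Proof. exact: sq_liftK. Qed.
Lemma sub_inclK m : P m -> sub_incl (sub_proj m) = m.
Proof. by move=> Pm; apply/eqP; rewrite -subr_eq0; apply/eqP; exact: (sq_lift_proj subP (zero_submodule M) Pm). Qed.
Lemma sub_projD m m' : P m -> P m' -> sub_proj (m + m') = sub_proj m + sub_proj m'.
Proof. exact: sq_projD. Qed.
Lemma sub_projZ c m : P m -> sub_proj (c *: m) = c *: sub_proj m.
Proof. exact: sq_projZ. Qed.
Lemma sub_incl_inj : injective sub_incl.
Proof. by move=> q q' eqq; rewrite -(sub_projK q) -(sub_projK q') eqq. Qed.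

Lemma sub_incl_is_linear : linear sub_incl.
Proof.
have [_ PD PZ] := subP; move=> c q q'.
have Pcq : P (c *: sub_incl q) by apply: PZ; apply: sub_inclP.
have Psum : P (c *: sub_incl q + sub_incl q') by apply: PD => //; apply: sub_inclP.
by rewrite -(sub_inclK Psum) sub_projD ?sub_projZ ?sub_projK //; apply: sub_inclP.
Qed.
Definition sub_inclL : {linear submod -> M} := linear_of sub_incl_is_linear.
End SubmoduleModule.

Section Balanced.
Variables (R S : comPzRingType) (h : {rmorphism R -> S}).
Variables (M : lmodType R) (P : M -> Prop) (V : lmodType S) (phi : S -> M -> V).
Hypothesis bal : balanced h P phi.

Lemma bal_linl m : P m -> forall c s s', phi (c * s + s') m = c *: phi s m + phi s' m.
Proof. by case: bal => + _ _; apply. Qed.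
Lemma bal_addr s m m' : P m -> P m' -> phi s (m + m') = phi s m + phi s m'.
Proof. by case: bal => _ + _; apply. Qed.
Lemma bal_hmul s r m : P m -> phi (h r * s) m = phi s (r *: m).
Proof. by case: bal => _ _; apply. Qed.
Lemma bal0l m : P m -> phi 0 m = 0.
Proof.
move=> Pm; have := bal_linl Pm 1 0 0; rewrite mul1r addr0 scale1r => /esym/eqP.
by rewrite -subr_eq0 addrK => /eqP.
Qed.
Lemma balZl m c s : P m -> phi (c * s) m = c *: phi s m.
Proof. by move=> Pm; rewrite -[c * s]addr0 bal_linl // bal0l // addr0. Qed.
Lemma bal0r s : P 0 -> phi s 0 = 0.
Proof. by move=> P0; apply: (addrI (phi s 0)); rewrite -bal_addr // !addr0. Qed.

Lemma balanced_restrict (Q : M -> Prop) : (forall m, Q m -> P m) -> balanced h Q phi.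
Proof.
move=> QP; split=> [m /QP|s m m' /QP Pm /QP|s r m /QP]; [exact: bal_linl|exact: bal_addr|].
exact: bal_hmul.
Qed.

Lemma balanced_comp_linear (V' : lmodType S) (f : {linear V -> V'}) :
  balanced h P (fun s m => f (phi s m)).
Proof.
split=> [m Pm c s s'|s m m' Pm Pm'|s r m Pm].
- by rewrite bal_linl // linearP.
- by rewrite bal_addr // linearD.
- by rewrite bal_hmul.
Qed.

Lemma balanced_linear_comp (N : lmodType R) (Q : N -> Prop) (f : {linear N -> M}) :
  (forall n, Q n -> P (f n)) -> balanced h Q (fun s n => phi s (f n)).
Proof.
move=> QP; split=> [n Qn c s s'|s n n' Qn Qn'|s r n Qn].
- by rewrite bal_linl //; apply: QP.
- by rewrite linearD bal_addr //; apply: QP.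
- by rewrite bal_hmul ?linearZ //; apply: QP.
Qed.
End Balanced.

Lemma balBr (R S : comPzRingType) (h : {rmorphism R -> S}) (M : lmodType R)
    (V : lmodType S) (phi : S -> M -> V) :
  balanced h (@TT R M) phi -> forall s m m', phi s (m - m') = phi s m - phi s m'.
Proof.
move=> bal s m m'; rewrite (bal_addr bal) // -scaleN1r -(bal_hmul bal) // rmorphN1.
by rewrite mulN1r -mulN1r (balZl bal) // scaleN1r.
Qed.

Section TensorProperties.
Variables (R S : comPzRingType) (h : {rmorphism R -> S}).
Variables (M : lmodType R) (P : M -> Prop) (T : lmodType S) (b : S -> M -> T).

Definition tspan (K : M -> Prop) (t : T) : Prop :=
  exists l : seq (S * M), (forall p, p \in l -> K p.2) /\ t = \sum_(p <- l) b p.1 p.2.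

Lemma tspan_pure (K : M -> Prop) s m : K m -> tspan K (b s m).
Proof. by move=> Km; exists [:: (s, m)]; rewrite big_seq1; split=> // p /[!inE] /eqP ->. Qed.

Lemma tspan_sub (K K' : M -> Prop) t : (forall m, K m -> K' m) -> tspan K t -> tspan K' t.
Proof. by move=> KK' [l [lK ->]]; exists l; split=> // p /lK /KK'. Qed.

Lemma tspan_submodule (K : M -> Prop) : balanced h K b -> submodule (tspan K).
Proof.
move=> bal; split.
- by exists [::]; rewrite big_nil.
- move=> _ _ [l1 [K1 ->]] [l2 [K2 ->]]; exists (l1 ++ l2); rewrite big_cat.
  by split=> // p; rewrite mem_cat => /orP [/K1|/K2].
- move=> r _ [l [Kl ->]]; exists [seq (r * p.1, p.2) | p <- l]; split.
    by move=> p /mapP [q /Kl Kq ->].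
  by rewrite big_map scaler_sumr; apply: eq_big_seq => p /Kl Kp; rewrite (balZl bal).
Qed.

Hypothesis tensT : is_tensor h P b.

Lemma tensor_balanced : balanced h P b. Proof. by case: tensT. Qed.

Lemma tensor_lift (V : lmodType S) (phi : S -> M -> V) : balanced h P phi ->
  exists psi : {linear T -> V}, forall s m, P m -> psi (b s m) = phi s m.
Proof. by case: tensT => _ univ /univ []. Qed.

Lemma tensor_ext (V : lmodType S) (psi1 psi2 : {linear T -> V}) :
  (forall s m, P m -> psi1 (b s m) = psi2 (b s m)) -> psi1 =1 psi2.
Proof.
case: tensT => bal univ.
by have [_] := univ V _ (balanced_comp_linear bal psi1); apply.
Qed.

Lemma tensor_span t : tspan P t.
Proof.
have subW := tspan_submodule tensor_balanced.
have zero_lin : linear (fun _ : T => 0 : quotmod subW).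
  by move=> c x y; rewrite scaler0 addr0.
apply/(quot_proj_eq0 subW); rewrite (tensor_ext (psi2 := linear_of zero_lin)) // => s m Pm.
by rewrite linear_ofE; apply/quot_proj_eq0/tspan_pure.
Qed.
End TensorProperties.

(* The tensor products S (x) M^J used below are not among the data of the theorem,
   so they have to be constructed. *)
Section TensorExists.
Variables (R S : comPzRingType) (h : {rmorphism R -> S}) (M : lmodType R).

Definition formal_sum : choiceType := seq (S * M)%type.
Definition eval_sum (V : lmodType S) (phi : S -> M -> V) (x : formal_sum) : V :=
  \sum_(p <- x) phi p.1 p.2.
Definition same_eval (x y : formal_sum) : Prop := forall (V : lmodType S) (phi : S -> M -> V),
  balanced h (@TT R M) phi -> eval_sum phi x = eval_sum phi y.
Definition fs_scale (c : S) (x : formal_sum) : formal_sum := [seq (c * p.1, p.2) | p <- x].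
Definition fs_opp (x : formal_sum) : formal_sum := fs_scale (-1) x.

Section EvalSum.
Variables (V : lmodType S) (phi : S -> M -> V) (bal : balanced h (@TT R M) phi).
Lemma eval_sum_cat x y : eval_sum phi (x ++ y) = eval_sum phi x + eval_sum phi y.
Proof. exact: big_cat. Qed.
Lemma eval_sum_scale c x : eval_sum phi (fs_scale c x) = c *: eval_sum phi x.
Proof. by rewrite /eval_sum big_map scaler_sumr; apply: eq_bigr => p _; rewrite (balZl bal). Qed.
End EvalSum.

Let eqv_refl x : same_eval x x. Proof. by []. Qed.
Let eqv_sym x y : same_eval x y -> same_eval y x. Proof. by move=> exy V phi bal; rewrite exy. Qed.
Let eqv_trans x y w : same_eval x y -> same_eval y w -> same_eval x w.
Proof. by move=> exy eyw V phi bal; rewrite exy ?eyw. Qed.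
Let cat_eqv x x' y y' : same_eval x x' -> same_eval y y' -> same_eval (x ++ y) (x' ++ y').
Proof. by move=> ex ey V phi bal; rewrite !eval_sum_cat ex ?ey. Qed.
Let scale_eqv c x x' : same_eval x x' -> same_eval (fs_scale c x) (fs_scale c x').
Proof. by move=> ex V phi bal; rewrite !(eval_sum_scale bal) ex. Qed.
Let opp_eqv x x' : same_eval x x' -> same_eval (fs_opp x) (fs_opp x').
Proof. exact: scale_eqv. Qed.
Let fs_catA x y w : same_eval (x ++ (y ++ w)) ((x ++ y) ++ w). Proof. by rewrite catA. Qed.
Let fs_catC x y : same_eval (x ++ y) (y ++ x).
Proof. by move=> V phi bal; rewrite !eval_sum_cat addrC. Qed.
Let fs_cat0 x : same_eval ([::] ++ x) x. Proof. by []. Qed.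
Let fs_catN x : same_eval (fs_opp x ++ x) [::].
Proof.
by move=> V phi bal; rewrite eval_sum_cat (eval_sum_scale bal) scaleN1r addNr /eval_sum big_nil.
Qed.
Let fs_scaleA a b x : same_eval (fs_scale a (fs_scale b x)) (fs_scale (a * b) x).
Proof. by move=> V phi bal; rewrite !(eval_sum_scale bal) scalerA. Qed.
Let fs_scale1 x : same_eval (fs_scale 1 x) x.
Proof. by move=> V phi bal; rewrite (eval_sum_scale bal) scale1r. Qed.
Let fs_scaleDr a x y : same_eval (fs_scale a (x ++ y)) (fs_scale a x ++ fs_scale a y).
Proof. by rewrite /fs_scale map_cat. Qed.
Let fs_scaleDl a b x : same_eval (fs_scale (a + b) x) (fs_scale a x ++ fs_scale b x).
Proof. by move=> V phi bal; rewrite eval_sum_cat !(eval_sum_scale bal) scalerDl. Qed.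

Definition ftensor : lmodType S :=
  @quot_lmod _ _ _ _ _ _ _ eqv_refl eqv_sym eqv_trans cat_eqv opp_eqv scale_eqv
  fs_catA fs_catC fs_cat0 fs_catN fs_scaleA fs_scale1 fs_scaleDr fs_scaleDl.
Let fpi (x : formal_sum) : ftensor := @qpi _ _ eqv_refl eqv_sym eqv_trans x.
Let fpi_eq x y : fpi x = fpi y <-> same_eval x y. Proof. exact: qpi_eq. Qed.
Let fpi_surj (q : ftensor) : exists x, q = fpi x. Proof. exact: qpi_surj. Qed.
Let fpiD x y : fpi (x ++ y) = fpi x + fpi y. Proof. exact: qpiD. Qed.
Let fpiZ c x : fpi (fs_scale c x) = c *: fpi x. Proof. exact: qpiZ. Qed.
Let fpi0 : fpi [::] = 0. Proof. exact: qpi0. Qed.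

Definition ftensor_pure (s : S) (m : M) : ftensor := fpi [:: (s, m)].

Let fpi_cons p x : fpi (p :: x) = ftensor_pure p.1 p.2 + fpi x.
Proof. by case: p => s m; rewrite /ftensor_pure -fpiD. Qed.

Lemma ftensor_balanced : balanced h (@TT R M) ftensor_pure.
Proof.
rewrite /ftensor_pure; split.
- move=> m _ c s s'; rewrite -fpiZ -fpiD; apply/fpi_eq => V phi bal.
  by rewrite eval_sum_cat (eval_sum_scale bal) /eval_sum !big_seq1 (bal_linl bal).
- move=> s m m' _ _; rewrite -fpiD; apply/fpi_eq => V phi bal.
  by rewrite eval_sum_cat /eval_sum !big_seq1 (bal_addr bal).
- by move=> s r m _; apply/fpi_eq => V phi bal; rewrite /eval_sum !big_seq1 (bal_hmul bal).
Qed.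

Lemma ftensor_is_tensor : is_tensor h (@TT R M) ftensor_pure.
Proof.
split; first exact: ftensor_balanced.
move=> V phi bal; split.
  have evalE x : eval_sum phi (repr (fpi x)) = eval_sum phi x.
    exact: (qpi_repr eqv_refl eqv_sym eqv_trans x V phi bal).
  have eval_lin : linear (fun q : ftensor => eval_sum phi (repr q)).
    move=> c q q'; have [x ->] := fpi_surj q; have [y ->] := fpi_surj q'.
    by rewrite -fpiZ -fpiD !evalE eval_sum_cat (eval_sum_scale bal).
  by exists (linear_of eval_lin) => s m _; rewrite linear_ofE evalE /eval_sum big_seq1.
move=> psi1 psi2 eq_pure q; have [x ->] := fpi_surj q.
elim: x => [|p x IH]; first by rewrite fpi0 !linear0.
by rewrite fpi_cons !linearD IH eq_pure.
Qed.
End TensorExists.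

Section SubmoduleTensor.
Variables (R S : comPzRingType) (h : {rmorphism R -> S}).
Variables (M : lmodType R) (P : M -> Prop) (subP : submodule P).
Variables (T : lmodType S) (b : S -> M -> T) (tensT : is_tensor h P b).

Lemma submod_tensor : is_tensor h (@TT R (submod subP)) (fun s q => b s (sub_incl q)).
Proof.
have bal := tensor_balanced tensT.
split; first by apply: (balanced_linear_comp bal (f := sub_inclL subP)) => q _; apply: sub_inclP.
move=> V phi balphi; split.
  have balP : balanced h P (fun s m => phi s (sub_proj subP m)).
    split=> [m Pm c s s'|s m m' Pm Pm'|s r m Pm].
    - by rewrite (bal_linl balphi).
    - by rewrite sub_projD // (bal_addr balphi).
    - by rewrite sub_projZ // (bal_hmul balphi).
  have [psi psiE] := tensor_lift tensT balP.
  by exists psi => s q _; rewrite psiE ?sub_projK //; apply: sub_inclP.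
move=> psi1 psi2 eq_pure; apply: (tensor_ext tensT) => s m Pm.
by rewrite -(sub_inclK subP Pm); apply: eq_pure.
Qed.
End SubmoduleTensor.

Lemma rho_injective (R S : comPzRingType) (h : {rmorphism R -> S}) (M : lmodType R)
    (P : M -> Prop) (T0 : lmodType S) (b0 : S -> M -> T0)
    (T : lmodType S) (b : S -> M -> T) (rho : {linear T0 -> T}) :
  flat h -> submodule P -> is_tensor h P b0 -> is_tensor h (@TT R M) b ->
  is_rho P b0 b rho -> injective rho.
Proof.
move=> flat_h subP tens0 tensT rhoE.
apply: (flat_h _ _ (sub_inclL subP) (@sub_incl_inj _ _ _ subP) _ _ _ _
  (submod_tensor subP tens0) tensT) => s q.
by rewrite rhoE //; apply: sub_inclP.
Qed.

Section QuotientTensor.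
Variables (R S : comPzRingType) (h : {rmorphism R -> S}).
Variables (M : lmodType R) (K : M -> Prop) (subK : submodule K).
Variables (T : lmodType S) (b : S -> M -> T) (tensT : is_tensor h (@TT R M) b).

Let bal := tensor_balanced tensT.
Let subW : submodule (tspan b K) := tspan_submodule (balanced_restrict bal (fun _ _ => I)).

Definition quot_tensor_pure s (q : quotmod subK) : quotmod subW :=
  quot_proj subW (b s (quot_lift q)).

Lemma quot_tensor_pureE s m : quot_tensor_pure s (quot_proj subK m) = quot_proj subW (b s m).
Proof. by apply/quot_proj_eq; rewrite -(balBr bal); apply: tspan_pure; apply: quot_lift_proj. Qed.

Lemma quot_tensor : is_tensor h (@TT R (quotmod subK)) quot_tensor_pure.
Proof.
split.
  split=> [q _ c s s'|s q q' _ _|s r q _].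
  - by rewrite /quot_tensor_pure (bal_linl bal) // linearP.
  - have [m ->] := quot_proj_surj q; have [m' ->] := quot_proj_surj q'.
    by rewrite -linearD !quot_tensor_pureE (bal_addr bal) // linearD.
  - have [m ->] := quot_proj_surj q.
    by rewrite -linearZ !quot_tensor_pureE (bal_hmul bal).
move=> V phi balphi; split.
  have [psi psiE] := tensor_lift tensT
    (balanced_linear_comp balphi (f := quot_proj subK) (fun _ _ => I)).
  have psiW t : tspan b K t -> psi t = 0.
    move=> [l [Kl ->]]; rewrite linear_sum big1_seq // => p /andP [_ /Kl Kp].
    by rewrite psiE // (proj2 (quot_proj_eq0 subK _) Kp) (bal0r balphi).
  have [g gE] := quot_univ subW psiW; exists g => s q _.
  by rewrite /quot_tensor_pure gE psiE // quot_liftK.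
move=> psi1 psi2 eq_pure q; rewrite -(quot_liftK q).
have eq_comp : (psi1 \o quot_proj subW : {linear T -> V}) =1 psi2 \o quot_proj subW.
  by apply: (tensor_ext tensT) => s m _ /=; rewrite -quot_tensor_pureE eq_pure.
exact: eq_comp.
Qed.
End QuotientTensor.

Lemma bal_sumr (R S : comPzRingType) (h : {rmorphism R -> S}) (M : lmodType R)
    (V : lmodType S) (phi : S -> M -> V) : balanced h (@TT R M) phi ->
  forall s (K : Type) (l : seq K) (F : K -> M),
  phi s (\sum_(k <- l) F k) = \sum_(k <- l) phi s (F k).
Proof.
move=> bal s K l F; elim: l => [|k l IH]; first by rewrite !big_nil (bal0r bal).
by rewrite !big_cons (bal_addr bal) // IH.
Qed.

Section PowerTensor.
Variables (R S : comPzRingType) (h : {rmorphism R -> S}).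
Variables (M : lmodType R) (T : lmodType S) (b : S -> M -> T) (tensT : is_tensor h (@TT R M) b).
Variables (J : Type) (Tp : lmodType S) (bp : S -> dprod (fun _ : J => M) -> Tp).
Hypothesis tensTp : is_tensor h (@TT R (dprod (fun _ : J => M))) bp.

Lemma dprod_linE c (x y : dprod (fun _ : J => M)) i : (c *: x + y) i = c *: x i + y i.
Proof. by []. Qed.
Lemma dproj_is_linear i : linear (fun x : dprod (fun _ : J => M) => x i).
Proof. by move=> c x y; rewrite dprod_linE. Qed.
Definition dproj i : {linear dprod (fun _ : J => M) -> M} := linear_of (dproj_is_linear i).

Lemma tensor_proj_maps :
  exists G : J -> {linear Tp -> T}, forall i s x, G i (bp s x) = b s (x i).
Proof.
suff /choice [G GE] : forall i, exists G : {linear Tp -> T}, forall s x, G (bp s x) = b s (x i).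
  by exists G.
move=> i; have bal := balanced_linear_comp (tensor_balanced tensT) (f := dproj i) (Q := @TT R _) (fun _ _ => I).
by have [G GE] := tensor_lift tensTp bal; exists G => s x; apply: GE.
Qed.
End PowerTensor.

Section FinitePowerTensor.
Variables (R S : comPzRingType) (h : {rmorphism R -> S}).
Variables (M : lmodType R) (T : lmodType S) (b : S -> M -> T) (tensT : is_tensor h (@TT R M) b).
Variables (J : finType) (Tp : lmodType S) (bp : S -> dprod (fun _ : J => M) -> Tp).
Hypothesis tensTp : is_tensor h (@TT R (dprod (fun _ : J => M))) bp.
Variables (G : J -> {linear Tp -> T}) (GE : forall i s x, G i (bp s x) = b s (x i)).

Definition dinj (i : J) (m : M) : dprod (fun _ : J => M) := fun j => if j == i then m else 0.
Lemma dinj_is_linear i : linear (dinj i).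
Proof.
move=> c x y; apply: functional_extensionality_dep => j; rewrite dprod_linE /dinj.
by case: (j == i); rewrite ?scaler0 ?addr0.
Qed.

Lemma dprod_sum_dinj (x : dprod (fun _ : J => M)) : x = \sum_i dinj i (x i).
Proof.
apply: functional_extensionality_dep => j.
rewrite -[RHS]/(dproj M j _) linear_sum (bigD1 j) //= /linear_fun /dinj /= eqxx.
by rewrite big1 ?addr0 // => i; rewrite eq_sym => /negbTE ->.
Qed.

Lemma tensor_power_fin_inj : injective (fun u : Tp => (fun i => G i u) : dprod (fun _ : J => T)).
Proof.
have [inj injE] : exists inj : J -> {linear T -> Tp}, forall i s m, inj i (b s m) = bp s (dinj i m).
  suff /choice [inj injE] : forall i, exists f : {linear T -> Tp},
      forall s m, f (b s m) = bp s (dinj i m) by exists inj.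
  move=> i; have bal := balanced_linear_comp (tensor_balanced tensTp)
    (f := linear_of (dinj_is_linear i)) (Q := @TT R _) (fun _ _ => I).
  by have [f fE] := tensor_lift tensT bal; exists f => s m; apply: fE.
have sum_lin : linear (fun u : Tp => \sum_i inj i (G i u)).
  by move=> c u v; rewrite scaler_sumr -big_split; apply: eq_bigr => i _; rewrite !linearP.
have sumK : linear_of sum_lin =1 idfun.
  apply: (tensor_ext tensTp) => s x _; rewrite linear_ofE /=.
  under eq_bigr do rewrite GE injE.
  by rewrite -(bal_sumr (tensor_balanced tensTp)) -dprod_sum_dinj.
move=> u v /(congr1 (fun x : dprod (fun _ : J => T) => \sum_i inj i (x i))).
by have := sumK u; have := sumK v; rewrite !linear_ofE /= => -> ->.
Qed.
End FinitePowerTensor.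

Section KilledSpan.
Variables (R S : comPzRingType) (h : {rmorphism R -> S}) (flat_h : flat h).
Variables (M : lmodType R) (T : lmodType S) (b : S -> M -> T) (tensT : is_tensor h (@TT R M) b).
Variables (J : Type) (r : J -> R).
Variables (Tp : lmodType S) (bp : S -> dprod (fun _ : J => M) -> Tp).
Hypothesis tensTp : is_tensor h (@TT R (dprod (fun _ : J => M))) bp.
Variables (G : J -> {linear Tp -> T}) (GE : forall i s x, G i (bp s x) = b s (x i)).
Hypothesis G_inj : injective (fun u : Tp => (fun i => G i u) : dprod (fun _ : J => T)).

Definition killed_by (x : M) : Prop := forall i, r i *: x = 0.

Lemma killed_by_submodule : submodule killed_by.
Proof.
split=> [i|x y kx ky i|c x kx i]; first by rewrite scaler0.
  by rewrite scalerDr kx ky addr0.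
by rewrite scalerA mulrC -scalerA kx scaler0.
Qed.

Definition mul_family (x : M) : dprod (fun _ : J => M) := fun i => r i *: x.
Lemma mul_family_is_linear : linear mul_family.
Proof.
move=> c x y; apply: functional_extensionality_dep => i.
by rewrite dprod_linE /mul_family scalerDr !scalerA mulrC.
Qed.

Let subK := killed_by_submodule.
Let bal := tensor_balanced tensT.
Let subW : submodule (tspan b killed_by) :=
  tspan_submodule (balanced_restrict bal (fun _ _ => I)).

(* The quotient M / killed_by embeds in M^J via x |-> (r_i x)_i; flatness turns this
   into an embedding of (S (x) M) / tspan killed_by into S (x) M^J. *)
Lemma quot_killed_embedding : exists2 g : {linear quotmod subW -> Tp}, injective g &
  forall s m, g (quot_proj subW (b s m)) = bp s (mul_family m).
Proof.
have [f fE] := quot_univ subK (f := linear_of mul_family_is_linear)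
  (fun m km => functional_extensionality_dep (fun i => km i)).
have f_inj : injective f.
  move=> q q'; have [x ->] := quot_proj_surj q; have [y ->] := quot_proj_surj q'.
  rewrite !fE !linear_ofE => rxy; apply/quot_proj_eq => i.
  have rxy_i := congr1 (fun z : dprod (fun _ : J => M) => z i) rxy.
  by rewrite scalerBr; rewrite /mul_family /= in rxy_i; rewrite rxy_i subrr.
have [g gE] := tensor_lift (quot_tensor subK tensT)
  (balanced_linear_comp (tensor_balanced tensTp) (f := f) (Q := @TT R _) (fun _ _ => I)).
exists g; first by apply: (flat_h f_inj (quot_tensor subK tensT) tensTp) => s n; apply: gE.
by move=> s m; rewrite -quot_tensor_pureE gE // fE linear_ofE.
Qed.

Lemma tensor_killed_span t : (forall i, h (r i) *: t = 0) -> tspan b killed_by t.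
Proof.
move=> kt; have [g g_inj gE] := quot_killed_embedding.
have Gg i : (G i \o g \o quot_proj subW : {linear T -> T}) =1 *:%R (h (r i)).
  apply: (tensor_ext tensT) => s m _ /=.
  by rewrite gE GE -(bal_hmul bal) // (balZl bal).
apply/(quot_proj_eq0 subW); apply: g_inj; rewrite linear0; apply: G_inj.
by apply: functional_extensionality_dep => i; rewrite linear0 [LHS]Gg /= kt.
Qed.
End KilledSpan.

Section Ideals.
Variable A : comPzRingType.
Implicit Types (X J : A -> Prop).

Lemma gen_ideal1 X y : X y -> gen_ideal X y.
Proof. by move=> Xy; exists 1%N, (fun _ => 1), (fun _ => y); rewrite big_ord1 mul1r. Qed.

Lemma gen_ideal_min X J : is_ideal J -> (forall y, X y -> J y) ->
  forall r, gen_ideal X r -> J r.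
Proof.
move=> [J0 JD JM] XJ r [k [c [g [Xg ->]]]].
by apply: (big_ind J) => // i _; apply: JM; apply: XJ.
Qed.

Lemma ideal_sum J (I : Type) (s : seq I) (F : I -> A) : is_ideal J ->
  (forall i, J (F i)) -> J (\sum_(i <- s) F i).
Proof. by move=> [J0 JD _] JF; apply: (big_ind J). Qed.

Lemma ideal_opp J x : is_ideal J -> J x -> J (- x).
Proof. by move=> [_ _ JM] Jx; rewrite -mulN1r; apply: JM. Qed.

Lemma gen_ideal_kill (M : lmodType A) X (x : M) : (forall y, X y -> y *: x = 0) ->
  forall r, gen_ideal X r -> r *: x = 0.
Proof.
move=> Xx r [k [c [g [Xg ->]]]]; rewrite scaler_suml big1 // => i _.
by rewrite -scalerA Xx ?scaler0.
Qed.

Lemma ideal_pow_prod J n (f : 'I_n -> A) : (forall j, J (f j)) -> ideal_pow J n (\prod_j f j).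
Proof. by move=> Jf; apply: gen_ideal1; exists f. Qed.

Lemma ideal_pow0 J : ideal_pow J 0 1.
Proof. by have := @ideal_pow_prod J 0 (fun _ => 0); rewrite big_ord0; apply=> -[]. Qed.

Lemma ideal_pow_expr J r N : J r -> ideal_pow J N (r ^+ N).
Proof.
by move=> Jr; have := @ideal_pow_prod J N (fun _ => r); rewrite prodr_const card_ord; apply.
Qed.

Lemma ideal_powP J N r : ideal_pow J N r ->
  exists k (c : 'I_k -> A) (f : 'I_k -> 'I_N -> A),
    (forall i j, J (f i j)) /\ r = \sum_i c i * \prod_j f i j.
Proof.
move=> [k [c [g [Jg ->]]]].
have [f fE] := fin_all_exists (P := fun i f => (forall j, J (f j)) /\ g i = \prod_j f j) Jg.
exists k, c, f; split=> [i|]; first by case: (fE i).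
by apply: eq_bigr => i _; case: (fE i) => _ ->.
Qed.

Lemma ideal_pow_sum J N k (c : 'I_k -> A) (f : 'I_k -> 'I_N -> A) :
  (forall i j, J (f i j)) -> ideal_pow J N (\sum_i c i * \prod_j f i j).
Proof.
by move=> Jf; exists k, c, (fun i => \prod_j f i j); split=> // i; exists (f i).
Qed.

Lemma ideal_pow_addl J N d r : ideal_pow J (N + d) r -> ideal_pow J N r.
Proof.
move=> /ideal_powP [k [c [f [Jf ->]]]].
rewrite (eq_bigr (fun i => (c i * \prod_(j < d) f i (rshift N j)) *
  \prod_(j < N) f i (lshift d j))); first by apply: ideal_pow_sum.
by move=> i _; rewrite big_split_ord /= mulrAC -mulrA.
Qed.

Lemma ideal_pow_sub J n r : is_ideal J -> (0 < n)%N -> ideal_pow J n r -> J r.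
Proof.
move=> idJ; case: n => // n _; apply: gen_ideal_min => // _ [f [Jf ->]].
by case: idJ => _ _ JM; rewrite big_ord_recl mulrC; apply: JM.
Qed.

Lemma ideal_pow_mulS J N al r : J al -> ideal_pow J N r -> ideal_pow J N.+1 (al * r).
Proof.
move=> Jal /ideal_powP [k [c [f [Jf ->]]]].
pose f' i (j : 'I_N.+1) := if unlift ord0 j is Some j' then f i j' else al.
rewrite mulr_sumr (eq_bigr (fun i => c i * \prod_j f' i j)).
  by apply: ideal_pow_sum => i j; rewrite /f'; case: (unlift _ _).
move=> i _; rewrite [in RHS]big_ord_recl /f' unlift_none mulrCA.
by congr (_ * (_ * _)); apply: eq_bigr => j _; rewrite liftK.
Qed.
Lemma prod_congr_ideal (B J : A -> Prop) L (f : 'I_L -> A) : is_ideal J ->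
  (forall j, exists2 be, B be & J (f j - be)) ->
  exists be : 'I_L -> A, (forall j, B (be j)) /\ J (\prod_j f j - \prod_j be j).
Proof.
move=> [J0 JD JM]; elim: L f => [|L IH] f fB.
  by exists (fun _ => 0); split=> [[]//|]; rewrite !big_ord0 subrr.
have [be0 Bbe0 Jf0] := fB ord0.
have [be [Bbe Jprod]] := IH (fun j => f (lift ord0 j)) (fun j => fB _).
exists (fun j => if unlift ord0 j is Some j' then be j' else be0); split.
  by move=> j; case: (unlift _ _).
rewrite !big_ord_recl /= unlift_none.
under [X in _ - _ * X]eq_bigr do rewrite liftK.
set P := \prod_(i < L) f (lift ord0 i); set Q := \prod_(i < L) be i.
have -> : f ord0 * P - be0 * Q = f ord0 * (P - Q) + (f ord0 - be0) * Q.
  by rewrite mulrBr mulrBl addrA subrK.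
by apply: JD; [apply: JM|rewrite mulrC; apply: JM].
Qed.
End Ideals.

Section Torsion.
Variables (A : comPzRingType) (M : lmodType A) (a : A -> Prop).

Lemma Gamma_submodule : submodule (@Gamma A M a).
Proof.
split.
- by exists 0%N => r _; rewrite scaler0.
- move=> x y [N1 kx] [N2 ky]; exists (N1 + N2)%N => r aNr.
  have aN1r := ideal_pow_addl aNr; rewrite addnC in aNr.
  by rewrite scalerDr kx ?ky ?addr0 //; apply: ideal_pow_addl aNr.
- by move=> c x [N kx]; exists N => r aNr; rewrite scalerA mulrC -scalerA kx // scaler0.
Qed.

Lemma Gammabar_submodule : submodule (@Gammabar A M a).
Proof.
split.
- by move=> r _; exists 0%N; rewrite scaler0.
- move=> x y kx ky r ar; have [k1 kx1] := kx r ar; have [k2 ky2] := ky r ar.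
  exists (k1 + k2)%N; rewrite scalerDr exprD -!scalerA ky2 scaler0 addr0.
  by rewrite scalerA mulrC -scalerA kx1 scaler0.
- move=> c x kx r ar; have [k kxk] := kx r ar; exists k.
  by rewrite scalerA mulrC -scalerA kxk scaler0.
Qed.

Lemma Gamma_Gammabar (x : M) : Gamma a x -> Gammabar a x.
Proof. by move=> [N kx] r ar; exists N; apply: kx; apply: ideal_pow_expr. Qed.

Lemma Gamma_sum (K : eqType) (l : seq K) (F : K -> M) :
  (forall k, k \in l -> Gamma a (F k)) -> Gamma a (\sum_(k <- l) F k).
Proof.
have [G0 GD _] := Gamma_submodule; move=> lG.
by rewrite big_seq; apply: big_ind => // k /lG.
Qed.
End Torsion.

Section FinitelyGeneratedIdeal.
Variables (A : comPzRingType) (V : lmodType A).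

Lemma gen_ideal_fam k (g : 'I_k -> A) r : gen_ideal (fun y => exists i, y = g i) r ->
  exists c : 'I_k -> A, r = \sum_i c i * g i.
Proof.
move=> [k' [d [g' [gg' ->]]]].
have [s sE] : exists s : 'I_k' -> 'I_k, forall l, g' l = g (s l).
  by apply: (fin_all_exists (P := fun l i => g' l = g i)) => l; have [i ->] := gg' l; exists i.
exists (fun i => \sum_(l | s l == i) d l).
rewrite (partition_big s predT) //=; apply: eq_bigr => i _.
by rewrite mulr_suml; apply: eq_bigr => l /eqP <-; rewrite sE.
Qed.

Lemma gen_ideal_fam_sum k (g : 'I_k -> A) (c : 'I_k -> A) :
  gen_ideal (fun y => exists i, y = g i) (\sum_i c i * g i).
Proof. by exists k, c, g; split=> // i; exists i. Qed.

Lemma prod_fibers (I : finType) k (phi : I -> 'I_k) (g : 'I_k -> A) :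
  \prod_j g (phi j) = \prod_i g i ^+ #|[pred j | phi j == i]|.
Proof.
rewrite (partition_big phi predT) //=; apply: eq_bigr => i _.
by rewrite -prodr_const; apply: eq_bigr => j /eqP ->.
Qed.

Lemma large_fiber k N (phi : 'I_(k * N).+1 -> 'I_k) :
  exists i, (N <= #|[pred j | phi j == i]|)%N.
Proof.
apply/existsP; apply: contraT; rewrite negb_exists => /forallP small.
have sum_fibers : (\sum_i #|[pred j | phi j == i]| = (k * N).+1)%N.
  rewrite -[RHS]card_ord -sum1_card (partition_big phi predT) //=.
  by apply: eq_bigr => i _; rewrite -sum1_card.
have : (\sum_i #|[pred j | phi j == i]| <= \sum_(i < k) N)%N.
  by apply: leq_sum => i _; have := small i; rewrite -ltnNge => /ltnW.
by rewrite sum_fibers sum_nat_const card_ord ltnNge mulnC leqnn.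
Qed.

(* Expanding the product, every monomial contains some g_i at least N times. *)
Lemma prod_gen_ideal_kill k (g : 'I_k -> A) N (x : V) : (forall i, g i ^+ N *: x = 0) ->
  forall f : 'I_(k * N).+1 -> A, (forall j, gen_ideal (fun y => exists i, y = g i) (f j)) ->
  (\prod_j f j) *: x = 0.
Proof.
move=> kx f gf.
have [C fC] : exists C : 'I_(k * N).+1 -> 'I_k -> A, forall j, f j = \sum_i C j i * g i.
  exact: (fin_all_exists (P := fun j c => f j = \sum_i c i * g i)) (fun j => gen_ideal_fam (gf j)).
rewrite (eq_bigr _ (fun j _ => fC j)) bigA_distr_bigA /= scaler_suml big1 // => phi _.
rewrite big_split /= prod_fibers; have [i0 Ni0] := large_fiber phi.
rewrite (bigD1 i0) //= -(subnK Ni0) exprD mulrA mulrC mulrA.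
by rewrite -!scalerA kx !scaler0.
Qed.
End FinitelyGeneratedIdeal.

Definition Gamma_detected_by (A : comPzRingType) (M : lmodType A) (a : A -> Prop)
    k (g : 'I_k -> A) : Prop :=
  (forall i, a (g i)) /\ forall N (x : M), (forall i, g i ^+ N *: x = 0) -> Gamma a x.

Section FinitelyGeneratedPower.
Variables (A : comPzRingType) (a : A -> Prop).

Lemma prod_blocks n L (f : 'I_(n * L) -> A) : (forall j, a (f j)) ->
  exists F : nat -> A, (forall l, (l < L)%N -> ideal_pow a n (F l)) /\
    \prod_j f j = \prod_(l < L) F l.
Proof.
elim: L f => [|L IH] f af.
  by exists (fun _ => 1); split=> //; rewrite big_ord0; move: f af; rewrite muln0 => f _; rewrite big_ord0.
move: f af; rewrite mulnS => f af.
have [F [aF prodF]] := IH (fun j => f (rshift n j)) (fun j => af _).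
exists (fun l => if l is l'.+1 then F l' else \prod_(j < n) f (lshift (n * L) j)); split.
  by case=> [_|l /aF //]; apply: ideal_pow_prod.
by rewrite big_split_ord big_ord_recl /= prodF; congr (_ * _); apply: eq_bigr => l _; rewrite lift0.
Qed.

Lemma fg_pow_detects_Gamma (M : lmodType A) n k (g : 'I_k -> A) : is_ideal a -> (0 < n)%N ->
  (forall r, ideal_pow a n r <-> gen_ideal (fun y => exists i, y = g i) r) ->
  Gamma_detected_by M a g.
Proof.
move=> ida n_gt0 gen_g; split=> [i|N x kx].
  by apply: (ideal_pow_sub ida n_gt0); apply/gen_g/gen_ideal1; exists i.
exists (n * (k * N).+1)%N; apply: gen_ideal_kill => _ [f [af ->]].
have [F [aF ->]] := prod_blocks af.
by apply: (prod_gen_ideal_kill kx (f := F)) => l; apply/gen_g/aF.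
Qed.
End FinitelyGeneratedPower.

Section Noetherian.
Variables (A : comPzRingType) (M : lmodType A).

Definition ord_cat k k' (g : 'I_k -> A) (g' : 'I_k' -> A) (i : 'I_(k + k')) : A :=
  match split i with inl i1 => g i1 | inr i2 => g' i2 end.

Lemma sum_ord_cat k k' (c g : 'I_k -> A) (c' g' : 'I_k' -> A) :
  \sum_i ord_cat c c' i * ord_cat g g' i = \sum_i c i * g i + \sum_i c' i * g' i.
Proof.
rewrite big_split_ord /ord_cat; congr (_ + _); apply: eq_bigr => i _.
  by rewrite (unsplitK (inl i)).
by rewrite (unsplitK (inr i)).
Qed.

Definition ideal_approx (J : A -> Prop) (K : M -> Prop) k (g : 'I_k -> A) : Prop :=
  (forall i, J (g i)) /\ forall r, J r ->
    exists c : 'I_k -> A, forall m, K m -> (r - \sum_i c i * g i) *: m = 0.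

Hypothesis noethM : noetherian_module M.

(* The elements r m0, for r in J killing K, form a finitely generated submodule;
   its generators r_l m0 are adjoined to g. *)
Lemma ideal_approx_cons (J : A -> Prop) (K : M -> Prop) m0 k (g : 'I_k -> A) :
  is_ideal J -> ideal_approx J K g ->
  exists k' (g' : 'I_k' -> A), ideal_approx J (fun m => m = m0 \/ K m) g'.
Proof.
move=> idJ [Jg approx]; have [J0 JD JM] := idJ.
pose JK r := J r /\ forall m, K m -> r *: m = 0.
pose N (y : M) := exists r, JK r /\ y = r *: m0.
have subN : submodule N.
  split.
  - by exists 0; rewrite scale0r; split=> //; split=> // m _; rewrite scale0r.
  - move=> _ _ [r1 [[Jr1 K1] ->]] [r2 [[Jr2 K2] ->]]; exists (r1 + r2).
    by rewrite scalerDl; split=> //; split=> [|m Km]; rewrite ?scalerDl ?K1 ?K2 ?addr0 //; apply: JD.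
  - move=> c _ [r1 [[Jr1 K1] ->]]; exists (c * r1).
    by rewrite -scalerA; split=> //; split=> [|m Km]; rewrite -?scalerA ?K1 ?scaler0 //; apply: JM.
have [k' [e [Ne gen_e]]] := noethM subN.
have [rr rrE] := fin_all_exists (P := fun l r => JK r /\ e l = r *: m0) Ne.
exists (k + k')%N, (ord_cat g rr); split.
  by move=> i; rewrite /ord_cat; case: (split i) => // l; case: (rrE l) => [[]].
move=> r Jr; have [c cK] := approx r Jr.
set r' := r - \sum_i c i * g i.
have JKr' : JK r'.
  by split=> //; apply: JD => //; apply: ideal_opp => //; apply: ideal_sum => // i; apply: JM.
have [d r'm0] := gen_e _ (ex_intro _ r' (conj JKr' erefl)).
exists (ord_cat c d) => m; rewrite sum_ord_cat opprD addrA -/r' => -[->|Km].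
  rewrite scalerBl r'm0 scaler_suml; apply/eqP; rewrite subr_eq0; apply/eqP.
  by apply: eq_bigr => l _; rewrite -scalerA; case: (rrE l) => _ ->.
rewrite scalerBl (proj2 JKr') // scaler_suml big1 ?subr0 // => l _.
by rewrite -scalerA; case: (rrE l) => [[_ rrK] _]; rewrite rrK ?scaler0.
Qed.

Lemma ideal_approx_seq (J : A -> Prop) (s : seq M) : is_ideal J ->
  exists k (g : 'I_k -> A), ideal_approx J (fun m => m \in s) g.
Proof.
move=> idJ; elim: s => [|m0 s [k [g approx_s]]].
  by exists 0%N, (fun _ => 0); split=> [[]//|r _]; exists (fun _ => 0).
have [k' [g' [Jg' approx']]] := ideal_approx_cons m0 idJ approx_s.
exists k', g'; split=> // r Jr; have [c cK] := approx' r Jr; exists c => m.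
by rewrite inE => /orP [/eqP|] Km; apply: cK; [left|right].
Qed.

Lemma ideal_approx_all (J : A -> Prop) : is_ideal J ->
  exists k (g : 'I_k -> A), ideal_approx J (@TT A M) g.
Proof.
move=> idJ; have [kM [gM [_ genM]]] := noethM (TT_submodule M).
have [k [g [Jg approx]]] := ideal_approx_seq (codom gM) idJ.
exists k, g; split=> // r Jr; have [c cK] := approx r Jr; exists c => m _.
have [d ->] := genM m I; rewrite scaler_sumr big1 // => i _.
by rewrite scalerA mulrC -scalerA cK ?scaler0 // codom_f.
Qed.

Lemma annihilator_ideal : is_ideal (fun r : A => forall m : M, r *: m = 0).
Proof.
split=> [m|u v ku kv m|c u ku m]; first by rewrite scale0r.
  by rewrite scalerDl ku kv addr0.
by rewrite -scalerA ku scaler0.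
Qed.

(* Modulo the annihilator of M, a coincides with the ideal generated by g. *)
Lemma noetherian_detects_Gamma (a : A -> Prop) : is_ideal a ->
  exists k (g : 'I_k -> A), Gamma_detected_by M a g.
Proof.
move=> ida; have [k [g [ag approx]]] := ideal_approx_all ida.
exists k, g; split=> // N x kx; exists (k * N).+1; apply: gen_ideal_kill => _ [f [af ->]].
have near_gen j : exists2 be, gen_ideal (fun y => exists i, y = g i) be &
    forall m : M, (f j - be) *: m = 0.
  have [c cK] := approx _ (af j); exists (\sum_i c i * g i) => [|m].
    exact: gen_ideal_fam_sum.
  exact: cK.
have [be [gbe ann]] := prod_congr_ideal annihilator_ideal near_gen.
by rewrite -[\prod_j f j](subrK (\prod_j be j)) scalerDl ann add0r (prod_gen_ideal_kill kx).
Qed.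
End Noetherian.

Lemma common_exponent (A : comPzRingType) (V : lmodType A) k (r : 'I_k -> A) (x : V) :
  (forall i, exists n, r i ^+ n *: x = 0) -> exists N, forall i, r i ^+ N *: x = 0.
Proof.
move=> kx; have [n nE] := fin_all_exists (P := fun i n => r i ^+ n *: x = 0) kx.
exists (\sum_i n i) => i; rewrite (bigD1 i) //= exprD mulrC -scalerA nE.
by rewrite scaler0.
Qed.

Section BaseChange.
Variables (R S : comPzRingType) (h : {rmorphism R -> S}) (a : R -> Prop).
Variables (M : lmodType R) (T : lmodType S) (b : S -> M -> T) (tensT : is_tensor h (@TT R M) b).

Let bal := tensor_balanced tensT.

Lemma ideal_pow_ext N r : ideal_pow a N r -> ideal_pow (ext_ideal h a) N (h r).
Proof.
move=> /ideal_powP [k [c [f [af ->]]]]; rewrite rmorph_sum.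
rewrite (eq_bigr (fun i => h (c i) * \prod_j h (f i j))) => [|i _]; last first.
  by rewrite rmorphM rmorph_prod.
by apply: ideal_pow_sum => i j; apply: gen_ideal1; exists (f i j).
Qed.

Lemma ext_pow_kill_pure N (m : M) : (forall r, ideal_pow a N r -> r *: m = 0) ->
  forall f : 'I_N -> S, (forall j, ext_ideal h a (f j)) -> forall s, (\prod_j f j) *: b s m = 0.
Proof.
elim: N m => [|N IH] m km f af s.
  by rewrite big_ord0 scale1r -[m]scale1r km ?(bal0r bal) ?scale0r //; apply: ideal_pow0.
rewrite big_ord_recl -scalerA; apply: gen_ideal_kill (af ord0) => _ [al [aal ->]].
rewrite scalerA mulrC -scalerA -(balZl bal) // (bal_hmul bal) //.
apply: IH => [r aNr|j]; last exact: af.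
by rewrite scalerA mulrC; apply: km; apply: ideal_pow_mulS.
Qed.

Lemma Gamma_ext_of_tspan t : tspan b (Gamma a) t -> Gamma (ext_ideal h a) t.
Proof.
move=> [l [lG ->]]; apply: Gamma_sum => -[s m] /lG [N km] /=.
by exists N; apply: gen_ideal_kill => _ [f [af ->]]; apply: ext_pow_kill_pure.
Qed.

Lemma iso_onto_rho (P : M -> Prop) (T0 : lmodType S) (b0 : S -> M -> T0)
    (rho : {linear T0 -> T}) (Z : T -> Prop) :
  flat h -> submodule P -> is_tensor h P b0 -> is_rho P b0 b rho ->
  (forall t, Z t <-> tspan b P t) -> iso_onto rho Z.
Proof.
move=> flat_h subP tens0 rhoE ZP; split; first exact: rho_injective tens0 tensT rhoE.
move=> t; rewrite ZP; split=> [[l [lP ->]]|[u <-]].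
  exists (\sum_(p <- l) b0 p.1 p.2); rewrite linear_sum.
  by apply: eq_big_seq => p /lP Pp; rewrite rhoE.
have [l [lP ->]] := tensor_span tens0 u; exists l; split=> //.
by rewrite linear_sum; apply: eq_big_seq => p /lP Pp; rewrite rhoE.
Qed.
End BaseChange.

Section Detected.
Variables (R S : comPzRingType) (h : {rmorphism R -> S}) (flat_h : flat h) (a : R -> Prop).
Variables (M : lmodType R) (k : nat) (g : 'I_k -> R) (detect : Gamma_detected_by M a g).
Variables (T : lmodType S) (b : S -> M -> T) (tensT : is_tensor h (@TT R M) b).

Lemma detected_Gamma_eq (x : M) : Gamma a x <-> Gammabar a x.
Proof.
split=> [|ax]; first exact: Gamma_Gammabar.
have [ag test] := detect; have [N kx] := common_exponent (fun i => ax _ (ag i)).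
exact: test kx.
Qed.

(* The finite product (S (x) M)^k is S (x) M^k, so [tensor_killed_span] applies to the
   family g_i^N. *)
Lemma tspan_of_Gammabar_ext t : Gammabar (ext_ideal h a) t -> tspan b (Gamma a) t.
Proof.
move=> at_; have [ag test] := detect.
have ext_g i : ext_ideal h a (h (g i)) by apply: gen_ideal1; exists (g i).
have [N kt] := common_exponent (fun i => at_ _ (ext_g i)).
have tensTp := ftensor_is_tensor h (dprod (fun _ : 'I_k => M)).
have [G GE] := tensor_proj_maps tensT tensTp.
have := tensor_killed_span flat_h tensT tensTp GE (tensor_power_fin_inj tensT tensTp GE)
  (r := fun i => g i ^+ N) (t := t).
by move=> /(_ _) killed; apply: tspan_sub (killed _) => [x /test//|i]; rewrite rmorphXn.
Qed.

Lemma detected_rho_iso (T0 : lmodType S) (b0 : S -> M -> T0) (rho : {linear T0 -> T})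
    (T1 : lmodType S) (b1 : S -> M -> T1) (rhobar : {linear T1 -> T}) :
  is_tensor h (Gamma a) b0 -> is_rho (Gamma a) b0 b rho ->
  is_tensor h (Gammabar a) b1 -> is_rho (Gammabar a) b1 b rhobar ->
  [/\ (forall x : M, Gamma a x <-> Gammabar a x),
      (forall t : T, Gamma (ext_ideal h a) t <-> Gammabar (ext_ideal h a) t),
      iso_onto rho (Gamma (ext_ideal h a))
    & iso_onto rhobar (Gammabar (ext_ideal h a))].
Proof.
move=> tens0 rho0 tens1 rho1; have of_span := Gamma_ext_of_tspan (a := a) tensT.
have Gamma_ext t : Gamma (ext_ideal h a) t <-> tspan b (Gamma a) t.
  split=> [/Gamma_Gammabar|]; [exact: tspan_of_Gammabar_ext|exact: of_span].
have Gammabar_ext t : Gammabar (ext_ideal h a) t <-> tspan b (Gammabar a) t.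
  split=> [/tspan_of_Gammabar_ext|span]; first by apply: tspan_sub => x /detected_Gamma_eq.
  by apply/Gamma_Gammabar/of_span; apply: tspan_sub span => x /detected_Gamma_eq.
split=> [x|t||]; first exact: detected_Gamma_eq.
- by rewrite Gamma_ext; split=> [/of_span/Gamma_Gammabar|/tspan_of_Gammabar_ext].
- exact: (iso_onto_rho tensT flat_h (Gamma_submodule M a) tens0 rho0 (Z := Gamma _) Gamma_ext).
- exact: (iso_onto_rho tensT flat_h (Gammabar_submodule M a) tens1 rho1 (Z := Gammabar _)
    Gammabar_ext).
Qed.
End Detected.

Section MittagLeffler.
Variables (R S : comPzRingType) (h : {rmorphism R -> S}) (flat_h : flat h).
Hypothesis ml : mittag_leffler h.
Variables (a : R -> Prop) (M : lmodType R).
Variables (T : lmodType S) (b : S -> M -> T) (tensT : is_tensor h (@TT R M) b).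

(* As in the finite case, now indexed by all of a^N; Mittag-Leffler replaces finiteness. *)
Lemma tspan_of_Gamma_ext_ML t : Gamma (ext_ideal h a) t -> tspan b (Gamma a) t.
Proof.
move=> [N kt]; pose J := {r : R | ideal_pow a N r}.
have tensTp := ftensor_is_tensor h (dprod (fun _ : J => M)).
have [G GE] := tensor_proj_maps tensT tensTp.
have G_inj := ml tensTp (fun _ => tensT) GE.
have := tensor_killed_span flat_h tensT tensTp GE G_inj (r := sval) (t := t).
move=> /(_ _) killed; apply: tspan_sub (killed _) => [x kx|[r aNr]].
  by exists N => r aNr; apply: (kx (exist _ r aNr)).
by apply: kt; apply: ideal_pow_ext.
Qed.

Lemma ML_rho_iso (T0 : lmodType S) (b0 : S -> M -> T0) (rho : {linear T0 -> T}) :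
  is_tensor h (Gamma a) b0 -> is_rho (Gamma a) b0 b rho -> iso_onto rho (Gamma (ext_ideal h a)).
Proof.
move=> tens0 rho0; apply: (iso_onto_rho tensT flat_h (Gamma_submodule M a) tens0 rho0) => t.
by split=> [/tspan_of_Gamma_ext_ML|/(Gamma_ext_of_tspan tensT)].
Qed.
End MittagLeffler.

Theorem corollary8p6 (R S : comPzRingType) (h : {rmorphism R -> S}) (a : R -> Prop) :
  flat h -> is_ideal a ->
  ((exists n : nat, (1 <= n)%N /\ fg_ideal (ideal_pow a n)) ->
   forall (M : lmodType R)
     (T : lmodType S) (b : S -> M -> T)
     (T0 : lmodType S) (b0 : S -> M -> T0) (rho : {linear T0 -> T})
     (T1 : lmodType S) (b1 : S -> M -> T1) (rhobar : {linear T1 -> T}),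
     is_tensor h (@TT R M) b ->
     is_tensor h (Gamma a) b0 -> is_rho (Gamma a) b0 b rho ->
     is_tensor h (Gammabar a) b1 -> is_rho (Gammabar a) b1 b rhobar ->
     [/\ (forall x : M, Gamma a x <-> Gammabar a x),
         (forall t : T, Gamma (ext_ideal h a) t <-> Gammabar (ext_ideal h a) t),
         iso_onto rho (Gamma (ext_ideal h a))
       & iso_onto rhobar (Gammabar (ext_ideal h a))])
  /\
  (forall (M : lmodType R), noetherian_module M ->
   forall (T : lmodType S) (b : S -> M -> T)
     (T0 : lmodType S) (b0 : S -> M -> T0) (rho : {linear T0 -> T})
     (T1 : lmodType S) (b1 : S -> M -> T1) (rhobar : {linear T1 -> T}),
     is_tensor h (@TT R M) b ->
     is_tensor h (Gamma a) b0 -> is_rho (Gamma a) b0 b rho ->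
     is_tensor h (Gammabar a) b1 -> is_rho (Gammabar a) b1 b rhobar ->
     [/\ (forall x : M, Gamma a x <-> Gammabar a x),
         (forall t : T, Gamma (ext_ideal h a) t <-> Gammabar (ext_ideal h a) t),
         iso_onto rho (Gamma (ext_ideal h a))
       & iso_onto rhobar (Gammabar (ext_ideal h a))])
  /\
  (mittag_leffler h ->
   forall (M : lmodType R)
     (T : lmodType S) (b : S -> M -> T)
     (T0 : lmodType S) (b0 : S -> M -> T0) (rho : {linear T0 -> T}),
     is_tensor h (@TT R M) b ->
     is_tensor h (Gamma a) b0 -> is_rho (Gamma a) b0 b rho ->
     iso_onto rho (Gamma (ext_ideal h a))).
Proof.
move=> flat_h ida; split; [|split].
- move=> [n [n_gt0 [k [g gen_g]]]] M T b T0 b0 rho T1 b1 rhobar tensT tens0 rho0 tens1 rho1.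
  have detect := fg_pow_detects_Gamma M ida n_gt0 gen_g.
  exact (detected_rho_iso flat_h detect tensT tens0 rho0 tens1 rho1).
- move=> M noethM T b T0 b0 rho T1 b1 rhobar tensT tens0 rho0 tens1 rho1.
  have [k [g detect]] := noetherian_detects_Gamma noethM ida.
  exact (detected_rho_iso flat_h detect tensT tens0 rho0 tens1 rho1).
- by move=> ml M T b T0 b0 rho tensT; apply: ML_rho_iso.
Qed.
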